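(* Let $E=\langle S_e,I_e,P_e,\tau,O_1,\dots,O_n,\pi_e\rangle$ be a finite interpreted environment for $n$ agents, let $\varphi$ be a formula over $Prop$, and let $\Phi$ be a set of formulas each of the form $K_i\chi$ (some $i$), closed under subformulae of this form; let $\Phi_i=\{K_i\chi\in\Phi\}$. Let $E'$, the propositions $\mathrm{said}_i(\cdot)$, $\mathrm{Say}(\Phi)$ and $\mathrm{Know}(\Phi,A)$ be as defined in the context. Then the following are equivalent: (1) there is a tuple $A=\langle A_1,\dots,A_n\rangle$ of protocol automata for $E$ such that $\mathcal I(P_A,E),(r,0)\models\varphi\wedge\mathrm{Know}(\Phi,A)$ for all runs $r$ of $\mathcal I(P_A,E)$; (2) $\varphi\wedge\mathrm{Say}(\Phi)$ is realized in $E'$ by the joint protocol $P_{A'}$ of some tuple $A'$ of protocol automata for $E'$. Moreover, the same equivalence holds when in both (1) and (2) the automata are required to have finite state sets.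
   Context: Framework. $n$ agents; finite action sets $ACT_e$, $ACT_i$; joint actions $ACT=ACT_e\times ACT_1\times\cdots\times ACT_n$; atomic propositions $Prop$. A finite interpreted environment $E=\langle S_e,I_e,P_e,\tau,O_1,\dots,O_n,\pi_e\rangle$: finite state set $S_e$, initial states $I_e\subseteq S_e$, $P_e:S_e\to\mathcal P(ACT_e)\setminus\{\emptyset\}$, $\tau(\mathbf a):S_e\to S_e$ for each joint action $\mathbf a$, observation functions $O_i:S_e\to\mathcal O$, $\pi_e:S_e\to\{0,1\}^{Prop}$. A run is an infinite sequence $r=s_0s_1\dots$ with $s_0\in I_e$ and each $s_{m+1}=\tau(\langle a_e,a_1,\dots,a_n\rangle)(s_m)$ for some joint action with $a_e\in P_e(s_m)$; $r(m)=s_m$; $r[k..m]=s_k\dots s_m$. Local state $r_i(m)=O_i(s_0)\cdots O_i(s_m)$; $(r,m)\sim_i(r',m')$ iff $r_i(m)=r'_i(m')$. A protocol for agent $i$ is $P_i:\mathcal O^+\to\mathcal P(ACT_i)\setminus\{\emptyset\}$; $\mathcal R(\mathbf P,E)$ is the set of runs with $r(m+1)=\tau(\mathbf a)(r(m))$ for some $\mathbf a\in P_e(r(m))\times P_1(r_1(m))\times\cdots\times P_n(r_n(m))$ for all $m$; $\mathcal I(\mathbf P,E)$ interprets $p$ at $(r,m)$ by $\pi_e(r(m))(p)$. Formulas are built from $Prop$ by $\neg,\wedge,\bigcirc$ (next), $U$ (until), $\exists$, $K_i$; abbreviations $\Diamond\varphi=\mathrm{true}\,U\,\varphi$, $\Box\varphi=\neg\Diamond\neg\varphi$.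 Semantics at $(r,m)$, $r\in\mathcal R$: linear temporal operators along $r$; $\exists\varphi$ iff some $r'\in\mathcal R$ with $r'[0..m]=r[0..m]$ satisfies $\varphi$ at $(r',m)$; $K_i\varphi$ iff $\varphi$ holds at all $(r',m')$, $r'\in\mathcal R$, $(r',m')\sim_i(r,m)$. $\mathbf P$ realizes $\psi$ in $E$ if $\psi$ holds at $(r,0)$ for all $r\in\mathcal R(\mathbf P,E)$. Protocol automata: $A_i=\langle Q_i,q_i,\mu_i,\alpha_i\rangle$ with state set $Q_i$, initial state $q_i$, transition function $\mu_i:Q_i\times\mathcal O\to Q_i$ and action function $\alpha_i:Q_i\to\mathcal P(ACT_i)\setminus\{\emptyset\}$; $A_i(\epsilon)=q_i$, $A_i(\sigma\cdot o)=\mu_i(A_i(\sigma),o)$; its protocol is $P_{A_i}(\sigma)=\alpha_i(A_i(\sigma))$, and $P_A=\langle P_{A_1},\dots,P_{A_n}\rangle$. Define $(r,m)\approx_i^A(r',m')$ iff $A_i(r_i(m))=A_i(r'_i(m'))$, and a modality $K_i^A$: $\mathcal I,(r,m)\models K_i^A\chi$ iff $\mathcal I,(r',m')\models\chi$ for all points $(r',m')$ of $\mathcal I$ with $(r',m')\approx_i^A(r,m)$. Modified environment $E'=\langle S'_e,I'_e,P'_e,\tau',O'_1,\dots,O'_n,\pi'_e\rangle$ with agent actions $ACT'_i=ACT_i\times\mathcal P(\Phi_i)$: $S'_e=S_e\times\mathcal P(\Phi_1)\times\cdots\times\mathcal P(\Phi_n)$; $I'_e=I_e\times\{\emptyset\}\times\cdots\times\{\emptyset\}$;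 $P'_e(s,\Psi_1,\dots,\Psi_n)=P_e(s)$; $\tau'(\langle a_e,(a_1,\Psi'_1),\dots,(a_n,\Psi'_n)\rangle)(s,\Psi_1,\dots,\Psi_n)=(\tau(\langle a_e,a_1,\dots,a_n\rangle)(s),\Psi'_1,\dots,\Psi'_n)$; $O'_i(s,\Psi_1,\dots,\Psi_n)=O_i(s)$; $\pi'_e((s,\Psi_1,\dots,\Psi_n))(p)=\pi_e(s)(p)$ for $p\in Prop$, and for each $\chi\in\Phi_i$ a new atomic proposition $\mathrm{said}_i(\chi)$ with $\pi'_e((s,\Psi_1,\dots,\Psi_n))(\mathrm{said}_i(\chi))=1$ iff $\chi\in\Psi_i$. $\mathrm{Say}(\Phi)=\bigwedge_{i=1}^n\bigwedge_{K_i\chi\in\Phi}\Box(K_i\chi\equiv\bigcirc\,\mathrm{said}_i(K_i\chi))$ and $\mathrm{Know}(\Phi,A)=\bigwedge_{i=1}^n\bigwedge_{K_i\chi\in\Phi}\Box(K_i\chi\equiv K_i^A\chi)$. *)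

From HB Require Import structures.
From Stdlib Require List.
From mathcomp Require Import all_boot.
Set Implicit Arguments. Unset Strict Implicit. Unset Printing Implicit Defensive.

Inductive form (n : nat) (AP : Type) : Type :=
| FTop : form n AP
| FAtom : AP -> form n AP
| FNeg : form n AP -> form n AP
| FAnd : form n AP -> form n AP -> form n AP
| FNext : form n AP -> form n AP
| FUntil : form n AP -> form n AP -> form n AP
| FEx : form n AP -> form n AP
| FK : 'I_n -> form n AP -> form n AP.
Arguments FTop {n AP}. Arguments FAtom {n AP}. Arguments FNeg {n AP}.
Arguments FAnd {n AP}. Arguments FNext {n AP}. Arguments FUntil {n AP}.
Arguments FEx {n AP}. Arguments FK {n AP}.

Definition FDiam n AP (f : form n AP) := FUntil FTop f.
Definition FBox n AP (f : form n AP) := FNeg (FDiam (FNeg f)).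
Definition FEquiv n AP (f g : form n AP) :=
  FAnd (FNeg (FAnd f (FNeg g))) (FNeg (FAnd g (FNeg f))).

Inductive subform (n : nat) (AP : Type) : form n AP -> form n AP -> Prop :=
| sf_refl f : subform f f
| sf_neg f g : subform f g -> subform f (FNeg g)
| sf_andl f g h : subform f g -> subform f (FAnd g h)
| sf_andr f g h : subform f h -> subform f (FAnd g h)
| sf_next f g : subform f g -> subform f (FNext g)
| sf_untill f g h : subform f g -> subform f (FUntil g h)
| sf_untilr f g h : subform f h -> subform f (FUntil g h)
| sf_ex f g : subform f g -> subform f (FEx g)
| sf_K f i g : subform f g -> subform f (FK i g).

Fixpoint fmap (n : nat) (AP AP' : Type) (h : AP -> AP') (f : form n AP) : form n AP' :=
  match f with
  | FTop => FTop
  | FAtom p => FAtom (h p)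
  | FNeg g => FNeg (fmap h g)
  | FAnd g1 g2 => FAnd (fmap h g1) (fmap h g2)
  | FNext g => FNext (fmap h g)
  | FUntil g1 g2 => FUntil (fmap h g1) (fmap h g2)
  | FEx g => FEx (fmap h g)
  | FK i g => FK i (fmap h g)
  end.

(* Sets are predicates; the joint action <a_e,a_1,..,a_n> is given as a_e and
   the dependent tuple (a_i)_i.  Finiteness of S_e and of the action sets is
   imposed in the theorem by taking them to be finTypes. *)
Record env (n : nat) (Se ACTe : Type) (ACT : 'I_n -> Type) (Obs AP : Type) := Env {
  e_init : Se -> Prop;
  e_prot : Se -> ACTe -> Prop;
  e_trans : ACTe -> (forall i : 'I_n, ACT i) -> Se -> Se;
  e_obs : 'I_n -> Se -> Obs;
  e_val : Se -> AP -> bool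
}.
Arguments e_init {n Se ACTe ACT Obs AP} e. Arguments e_prot {n Se ACTe ACT Obs AP} e.
Arguments e_trans {n Se ACTe ACT Obs AP} e. Arguments e_obs {n Se ACTe ACT Obs AP} e.
Arguments e_val {n Se ACTe ACT Obs AP} e.

Definition env_wf n Se ACTe ACT Obs AP (E : @env n Se ACTe ACT Obs AP) :=
  forall s, exists a, e_prot E s a.

Definition run (S : Type) := nat -> S.

Definition local n (S Obs : Type) (O : 'I_n -> S -> Obs) (i : 'I_n) (r : run S) (m : nat)
  : seq Obs := [seq O i (r k) | k <- iota 0 m.+1].

Definition runs_of n Se ACTe ACT Obs AP (E : @env n Se ACTe ACT Obs AP)
  (P : forall i : 'I_n, seq Obs -> ACT i -> Prop) (r : run Se) : Prop :=
  e_init E (r 0) /\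
  forall m, exists (ae : ACTe) (a : forall i, ACT i),
    e_prot E (r m) ae /\ (forall i, P i (local (e_obs E) i r m) (a i)) /\
    r m.+1 = e_trans E ae a (r m).

Fixpoint sat n (S Obs AP : Type) (R : run S -> Prop) (O : 'I_n -> S -> Obs)
  (val : S -> AP -> bool) (f : form n AP) (r : run S) (m : nat) : Prop :=
  match f with
  | FTop => True
  | FAtom p => val (r m) p = true
  | FNeg g => ~ sat R O val g r m
  | FAnd g h => sat R O val g r m /\ sat R O val h r m
  | FNext g => sat R O val g r m.+1
  | FUntil g h => exists k, m <= k /\ sat R O val h r k /\
                   (forall j, m <= j -> j < k -> sat R O val g r j)
  | FEx g => exists r', R r' /\ (forall k, k <= m -> r' k = r k) /\ sat R O val g r' m
  | FK i g => forall r' m', R r' -> local O i r' m' = local O i r m -> sat R O val g r' m'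
  end.

Definition isat n Se ACTe ACT Obs AP (E : @env n Se ACTe ACT Obs AP) P
  (f : form n AP) (r : run Se) (m : nat) : Prop :=
  sat (runs_of E P) (e_obs E) (e_val E) f r m.

Definition realizes n Se ACTe ACT Obs AP (E : @env n Se ACTe ACT Obs AP) P (f : form n AP) :=
  forall r, runs_of E P r -> isat E P f r 0.

Record automaton (Obs A : Type) := Aut {
  aut_Q : Type;
  aut_q0 : aut_Q;
  aut_mu : aut_Q -> Obs -> aut_Q;
  aut_alpha : aut_Q -> A -> Prop
}.
Arguments aut_Q {Obs A} a. Arguments aut_q0 {Obs A} a. Arguments aut_mu {Obs A} a.
Arguments aut_alpha {Obs A} a.

Definition aut_wf Obs A (M : automaton Obs A) := forall q, exists a, aut_alpha M q a.
Definition aut_finite Obs A (M : automaton Obs A) :=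
  exists l : list (aut_Q M), forall q, List.In q l.

Definition aut_state Obs A (M : automaton Obs A) (sigma : seq Obs) : aut_Q M :=
  foldl (aut_mu M) (aut_q0 M) sigma.

Definition PA n Obs (ACT : 'I_n -> Type) (A : forall i, automaton Obs (ACT i))
  : forall i : 'I_n, seq Obs -> ACT i -> Prop :=
  fun i sigma a => aut_alpha (A i) (aut_state (A i) sigma) a.

Definition satKA n Se ACTe ACT Obs AP (E : @env n Se ACTe ACT Obs AP)
  (A : forall i, automaton Obs (ACT i)) (i : 'I_n) (chi : form n AP) (r : run Se) (m : nat) :=
  forall r' m', runs_of E (PA A) r' ->
    aut_state (A i) (local (e_obs E) i r' m') = aut_state (A i) (local (e_obs E) i r m) ->
    isat E (PA A) chi r' m'.

(* ---------- The set Phi of K-formulas ----------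
   Phi is given as a finite index type; element k stands for the formula
   K_{ag k} (chi k). *)
Section Modified.
Variables (n : nat) (Se ACTe : Type) (ACT : 'I_n -> Type) (Obs AP : Type).
Variable E : env Se ACTe ACT Obs AP.
Variables (Phi : finType) (ag : Phi -> 'I_n) (chi : Phi -> form n AP).

Definition Know (A : forall i, automaton Obs (ACT i)) (r : run Se) :=
  forall k m, isat E (PA A) (FK (ag k) (chi k)) r m <-> satKA E A (ag k) (chi k) r m.

Definition Phii (i : 'I_n) : {set Phi} := [set k | ag k == i].
Definition sayset (i : 'I_n) := {Psi : {set Phi} | Psi \subset Phii i}.
Definition ACT' (i : 'I_n) := (ACT i * sayset i)%type.
Definition Se' := (Se * forall i : 'I_n, sayset i)%type.
(* atomic propositions of E': Prop plus said_{ag k}(K_{ag k} chi k) for k in Phi *)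
Definition AP' := (AP + Phi)%type.

Definition Eprime : env Se' ACTe ACT' Obs AP' := {|
  e_init := fun s => e_init E s.1 /\ forall i, val (s.2 i) = set0;
  e_prot := fun s ae => e_prot E s.1 ae;
  e_trans := fun ae a s => (e_trans E ae (fun i => (a i).1) s.1, fun i => (a i).2);
  e_obs := fun i s => e_obs E i s.1;
  e_val := fun s p => match p with
                      | inl q => e_val E s.1 q
                      | inr k => k \in val (s.2 (ag k))
                      end |}.

Definition Say : form n AP' :=
  foldr (fun k acc =>
           FAnd (FBox (FEquiv (FK (ag k) (fmap inl (chi k))) (FNext (FAtom (inr k))))) acc)
        FTop (enum Phi).
End Modified.

(* The two automata of the equivalence share states and transitions; only
   the action labels differ.  The core fact is a bisimulation (sat_proj):
   when P is P' with announcements forgotten, every run of E' under P'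
   projects to a run of E under P and every run of E lifts back, so formulas
   over the original propositions have the same truth value in both.
   - (1) => (2): let agent i announce, in automaton state q, those K_i chi
     that hold at every point with state q (K_i^A chi); by Know(Phi,A) this
     is exactly what K_i chi says, which gives Say(Phi).
   - (2) => (1): drop the announcements.  K_i^A chi implies K_i chi
     trivially; conversely, if K_i chi holds at (r,m), agent i announces it
     there, and at any point with the same automaton state it may make the
     same announcement (lemma deviate), so by Say(Phi) K_i chi holds there
     too. *)
From HB Require Import structures.
From mathcomp Require Import all_boot.
From Stdlib Require Import ClassicalEpsilon Classical FunctionalExtensionality.
Set Implicit Arguments. Unset Strict Implicit. Unset Printing Implicit Defensive.

Lemma local_mkseq n (T Obs : Type) (O : 'I_n -> T -> Obs) i (r : run T) m :
  local O i r m = map (O i) (mkseq r m.+1).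
Proof. by rewrite /local /mkseq -map_comp. Qed.

Lemma local_upto n (T Obs : Type) (O : 'I_n -> T -> Obs) i (r1 r2 : run T) m :
  (forall k, k <= m -> r1 k = r2 k) -> local O i r1 m = local O i r2 m.
Proof.
move=> eq_r; apply/eq_in_map => k; rewrite mem_iota add0n => /andP[_ lt_km].
by rewrite eq_r // -ltnS.
Qed.

Lemma history_rec (T : Type) (x0 : T) (f : seq T -> T) :
  exists r : run T, r 0 = x0 /\ forall k, r k.+1 = f (mkseq r k.+1).
Proof.
pose hist k := iter k (fun h => rcons h (f h)) [:: x0].
pose r k := last x0 (hist k).
have histE k : hist k = mkseq r k.+1.
  by elim: k => [//|k IH]; rewrite mkseqS -IH /r /hist iterS last_rcons.
by exists r; split=> // k; rewrite -histE /r /hist iterS last_rcons.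
Qed.

Section Runs.
Variables (n : nat) (S ACTe : Type) (ACT : 'I_n -> Type) (Obs AP : Type).
Variable E : env S ACTe ACT Obs AP.
Local Unset Implicit Arguments.
Variable P : forall i : 'I_n, seq Obs -> ACT i -> Prop.
Local Set Implicit Arguments.

Definition step (r : run S) t :=
  exists (ae : ACTe) (a : forall i, ACT i),
    e_prot E (r t) ae /\ (forall i, P i (local (e_obs E) i r t) (a i)) /\
    r t.+1 = e_trans E ae a (r t).

Definition prefix_of (r : run S) M := e_init E (r 0) /\ forall t, t < M -> step r t.

Lemma run_prefix r M : runs_of E P r -> prefix_of r M.
Proof. by move=> [init_r step_r]; split=> // t _; exact: step_r. Qed.

Lemma prefix_upto r r' M :
  prefix_of r M -> (forall k, k <= M -> r' k = r k) -> prefix_of r' M.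
Proof.
move=> [init_r step_r] eq_r; split; first by rewrite eq_r.
move=> t lt_tM; have [ae [a [prot_ae [Pa next]]]] := step_r t lt_tM.
have eq_loc i : local (e_obs E) i r' t = local (e_obs E) i r t.
  by apply: local_upto => k le_kt; rewrite eq_r // (leq_trans le_kt (ltnW lt_tM)).
exists ae, a; rewrite !eq_r ?(ltnW lt_tM) //.
by split=> //; split=> // i; rewrite eq_loc.
Qed.

Lemma prefix_snoc r M : prefix_of r M -> step r M -> prefix_of r M.+1.
Proof.
move=> [init_r step_r] step_M; split=> // t; rewrite ltnS leq_eqVlt.
by case/orP=> [/eqP -> //|]; exact: step_r.
Qed.

Hypothesis E_wf : env_wf E.
Hypothesis P_wf : forall i s, exists a, P i s a.

Lemma extend_prefix r M :
  prefix_of r M -> exists r', runs_of E P r' /\ forall k, k <= M -> r' k = r k.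
Proof.
move=> pre_r.
have [ce prot_ce] : exists ce : S -> ACTe, forall s, e_prot E s (ce s).
  exists (fun s => proj1_sig (constructive_indefinite_description _ (E_wf s))).
  by move=> s; exact: proj2_sig.
have [cp P_cp] : exists cp : forall i, seq Obs -> ACT i, forall i s, P i s (cp i s).
  exists (fun i s => proj1_sig (constructive_indefinite_description _ (P_wf i s))).
  by move=> i s; exact: proj2_sig.
pose next (h : seq S) := if size h <= M then r (size h) else
  e_trans E (ce (last (r 0) h)) (fun i => cp i (map (e_obs E i) h)) (last (r 0) h).
have [r' [r'0 r'S]] := history_rec (r 0) next.
have r'_last k : last (r 0) (mkseq r' k.+1) = r' k by rewrite mkseqS last_rcons.
have eq_r k : k <= M -> r' k = r k.
  by case: k => [//|k] le_kM; rewrite r'S /next size_mkseq le_kM.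
exists r'; split=> //.
have pre_r' := prefix_upto pre_r eq_r.
split=> [|t]; first by case: pre_r'.
case: (ltnP t M) => [lt_tM|le_Mt]; first exact: (proj2 pre_r').
exists (ce (r' t)), (fun i => cp i (local (e_obs E) i r' t)); split=> //; split=> //.
rewrite r'S /next size_mkseq ltnNge le_Mt r'_last.
by congr (e_trans E _ _ _); apply: functional_extensionality_dep => i; rewrite local_mkseq.
Qed.

Lemma deviate r m i (ai : ACT i) :
  runs_of E P r -> P i (local (e_obs E) i r m) ai ->
  exists r', runs_of E P r' /\ (forall k, k <= m -> r' k = r k) /\
    exists ae a, a i = ai /\ r' m.+1 = e_trans E ae a (r m).
Proof.
move=> run_r P_ai; have [ae [b [prot_ae [Pb _]]]] := proj2 run_r m.
pose a := dfwith b ai.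
pose r1 t := if t <= m then r t else e_trans E ae a (r m).
have eq_r1 k : k <= m -> r1 k = r k by rewrite /r1 => ->.
have pre_r1 : prefix_of r1 m.+1.
  apply: prefix_snoc; first exact: prefix_upto (run_prefix m run_r) eq_r1.
  exists ae, a; rewrite /r1 leqnn ltnn; split=> //; split=> // j.
  rewrite (local_upto _ _ eq_r1) /a; by case: (dfwithP b ai j).
have [r' [run_r' eq_r']] := extend_prefix pre_r1.
exists r'; split=> //; split; first by move=> k le_km; rewrite eq_r' ?eq_r1 // ltnW.
by exists ae, a; rewrite eq_r' // /r1 ltnn /a dfwith_in.
Qed.
End Runs.

Section Semantics.
Variables (n : nat) (S Obs AP : Type) (R : run S -> Prop) (O : 'I_n -> S -> Obs).
Variable val : S -> AP -> bool.
Local Notation sat := (sat R O val).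

Lemma sat_box (f : form n AP) r m : sat (FBox f) r m <-> forall j, m <= j -> sat f r j.
Proof.
split=> [not_ev j le_mj|all_f [k [le_mk [not_f _]]]]; last exact: not_f (all_f k le_mk).
by apply: NNPP => not_f; apply: not_ev; exists j.
Qed.

Lemma sat_equiv (f g : form n AP) r m : sat (FEquiv f g) r m <-> (sat f r m <-> sat g r m).
Proof. by rewrite /=; case: (classic (sat f r m)); case: (classic (sat g r m)); tauto. Qed.

Lemma sat_bigand (I : eqType) (g : I -> form n AP) (s : seq I) r m :
  sat (foldr (fun k acc => FAnd (g k) acc) FTop s) r m <-> forall k, k \in s -> sat (g k) r m.
Proof.
elim: s => [|x s IH] /=; first by split.
rewrite IH; split=> [[gx gs] k|gs]; first by rewrite in_cons => /orP[/eqP -> | /gs].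
by split=> [|k s_k]; apply: gs; rewrite in_cons ?eqxx ?s_k ?orbT.
Qed.
End Semantics.

Lemma sat_Say n (S Obs AP : Type) (R : run S -> Prop) (O : 'I_n -> S -> Obs)
    (Phi : finType) (ag : Phi -> 'I_n) (chi : Phi -> form n AP)
    (val : S -> AP + Phi -> bool) r :
  sat R O val (Say ag chi) r 0 <->
  forall k j, sat R O val (FK (ag k) (fmap inl (chi k))) r j <-> val (r j.+1) (inr k) = true.
Proof.
rewrite /Say sat_bigand; split=> [Say_r k j|Say_r k _].
  by have /sat_box/(_ j (leq0n j))/sat_equiv := Say_r k (mem_enum _ k).
by apply/sat_box => j _; apply/sat_equiv; exact: Say_r.
Qed.

Section Projection.
Variables (n : nat) (Se ACTe : Type) (ACT : 'I_n -> Type) (Obs AP : Type).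
Variable E : env Se ACTe ACT Obs AP.
Variables (Phi : finType) (ag : Phi -> 'I_n).
Local Notation E' := (Eprime E ag).
Local Unset Implicit Arguments.
Variable P' : forall i : 'I_n, seq Obs -> ACT' ACT ag i -> Prop.
Variable P : forall i : 'I_n, seq Obs -> ACT i -> Prop.
Local Set Implicit Arguments.
Hypothesis P_proj : forall i s a, P i s a <-> exists Psi, P' i s (a, Psi).

Definition proj (rho : run (Se' Se ag)) : run Se := fun k => (rho k).1.

Lemma local_proj rho i m : local (e_obs E') i rho m = local (e_obs E) i (proj rho) m.
Proof. by []. Qed.

Lemma proj_run rho : runs_of E' P' rho -> runs_of E P (proj rho).
Proof.
move=> [[init_rho _] step_rho]; split=> // t.
have [ae [a [prot_ae [P'a next]]]] := step_rho t.
exists ae, (fun i => (a i).1); split=> //; split; last by rewrite /proj next.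
by move=> i; apply/P_proj; exists (a i).2; case: (a i) (P'a i).
Qed.

Definition no_said i : sayset ag i := exist _ set0 (sub0set _).

(* A legal E'-prefix whose projection follows a run r of E up to time m
   extends to a run of E' projecting exactly onto r: at every step the
   agents can make some announcement along with their E-actions. *)
Lemma lift_run rho r m :
  prefix_of E' P' rho m -> runs_of E P r -> (forall k, k <= m -> proj rho k = r k) ->
  exists rho', runs_of E' P' rho' /\ (forall k, k <= m -> rho' k = rho k) /\ proj rho' = r.
Proof.
move=> pre_rho [_ step_r] eq_proj.
have say_step t : exists Psi : forall i, sayset ag i, exists ae (a : forall i, ACT i),
    e_prot E (r t) ae /\ (forall i, P' i (local (e_obs E) i r t) (a i, Psi i)) /\
    r t.+1 = e_trans E ae a (r t).
  have [ae [a [prot_ae [Pa next]]]] := step_r t.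
  exists (fun i => proj1_sig (constructive_indefinite_description _ (proj1 (P_proj _ _) (Pa i)))).
  exists ae, a; split=> //; split=> // i.
  exact: (proj2_sig (constructive_indefinite_description _ (proj1 (P_proj _ _) (Pa i)))).
pose Psi t := proj1_sig (constructive_indefinite_description _ (say_step t)).
have step_Psi t := proj2_sig (constructive_indefinite_description _ (say_step t)).
pose rho' k := if k <= m then rho k else (r k, Psi k.-1).
have eq_rho' k : k <= m -> rho' k = rho k by rewrite /rho' => ->.
have proj_rho' : proj rho' = r.
  by apply: functional_extensionality => k; rewrite /proj /rho'; case: ifP => // /eq_proj.
have [init_rho' pre_rho'] := prefix_upto pre_rho eq_rho'.
exists rho'; split=> //; split=> // t.
case: (ltnP t m) => [lt_tm|le_mt]; first exact: pre_rho'.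
have [ae [a [prot_ae [P'a next]]]] := step_Psi t; rewrite -/(Psi t) in P'a.
exists ae, (fun i => (a i, Psi t i)).
have r_t : (rho' t).1 = r t by rewrite -proj_rho'.
split; first by rewrite /= r_t.
split; first by move=> i; rewrite local_proj proj_rho'.
by rewrite {1}/rho' ltnNge le_mt /= r_t next.
Qed.

Lemma lift_run0 r : runs_of E P r -> exists rho, runs_of E' P' rho /\ proj rho = r.
Proof.
move=> run_r.
have pre0 : prefix_of E' P' (fun _ => (r 0, no_said)) 0 by split=> //; case: run_r.
have agree0 k : k <= 0 -> proj (fun _ => (r 0, no_said)) k = r k by case: k.
have [rho [run_rho [_ proj_rho]]] := lift_run pre0 run_r agree0.
by exists rho.
Qed.

Lemma sat_proj (f : form n AP) rho m : runs_of E' P' rho ->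
  sat (runs_of E' P') (e_obs E') (e_val E') (fmap inl f) rho m <->
  sat (runs_of E P) (e_obs E) (e_val E) f (proj rho) m.
Proof.
elim: f rho m => [|p|g IH|g IHg h IHh|g IH|g IHg h IHh|g IH|i g IH] rho m run_rho /=.
- by [].
- by [].
- by rewrite IH.
- by rewrite IHg // IHh.
- exact: IH.
- split=> -[k [le_mk [h_k g_before]]]; exists k; split=> //.
    by rewrite -IHh //; split=> // j le_mj lt_jk; rewrite -IHg //; exact: g_before.
  by rewrite IHh //; split=> // j le_mj lt_jk; rewrite IHg //; exact: g_before.
- split=> [[rho' [run_rho' [eq_rho' g_rho']]]|[r' [run_r' [eq_r' g_r']]]].
    exists (proj rho'); split; first exact: proj_run.
    by split=> [k le_km|]; rewrite -?IH // /proj eq_rho'.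
  have [rho' [run_rho' [eq_rho' proj_rho']]] :=
    lift_run (run_prefix m run_rho) run_r' (fun k le_km => esym (eq_r' k le_km)).
  by subst r'; exists rho'; split=> //; split=> //; rewrite IH.
- split=> [K_rho r' m' run_r' same_loc|K_rho rho' m' run_rho' same_loc].
    have [rho' [run_rho' proj_rho']] := lift_run0 run_r'; subst r'.
    by rewrite -IH //; exact: K_rho.
  by rewrite IH //; apply: K_rho => //; exact: proj_run.
Qed.
End Projection.

Definition bool_of (Q : Prop) : bool := if excluded_middle_informative Q then true else false.

Lemma bool_ofP (Q : Prop) : bool_of Q = true <-> Q.
Proof. by rewrite /bool_of; case: excluded_middle_informative. Qed.

Section SayFromKnow.
Variables (n : nat) (Se ACTe : Type) (ACT : 'I_n -> Type) (Obs AP : Type).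
Variable E : env Se ACTe ACT Obs AP.
Variables (Phi : finType) (ag : Phi -> 'I_n) (chi : Phi -> form n AP).
Variable A : forall i, automaton Obs (ACT i).
Local Notation E' := (Eprime E ag).

(* chi k holds at every point where agent i's automaton is in state q, so
   that K_i^A (chi k) holds at (r,m) iff it holds in state A_i(r_i(m)). *)
Definition knows_in_state i (q : aut_Q (A i)) k := forall r m, runs_of E (PA A) r ->
  aut_state (A i) (local (e_obs E) i r m) = q -> isat E (PA A) (chi k) r m.

Definition known_in_state i (q : aut_Q (A i)) : {set Phi} :=
  [set k | (ag k == i) && bool_of (knows_in_state q k)].

Lemma known_in_state_sub i (q : aut_Q (A i)) : known_in_state q \subset Phii ag i.
Proof. by apply/subsetP => k; rewrite !inE => /andP[-> _]. Qed.

Definition said_in_state i (q : aut_Q (A i)) : sayset ag i :=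
  exist _ (known_in_state q) (known_in_state_sub q).

Definition announcing i : automaton Obs (ACT' ACT ag i) :=
  Aut (aut_q0 (A i)) (aut_mu (A i))
    (fun q a' => aut_alpha (A i) q a'.1 /\ a'.2 = said_in_state q).

Lemma announcing_wf : (forall i, aut_wf (A i)) -> forall i, aut_wf (announcing i).
Proof. by move=> A_wf i q; have [a alpha_a] := A_wf i q; exists (a, said_in_state q). Qed.

Lemma announcing_proj i s a : @PA _ _ _ A i s a <-> exists Psi, @PA _ _ _ announcing i s (a, Psi).
Proof. by split=> [alpha_a|[Psi []]] //; exists (said_in_state (aut_state (A i) s)). Qed.

(* Direction (1) => (2): when K_i and K_i^A agree on Phi, announcing what
   is A-known makes said(K_i chi) at time j+1 equivalent to K_i chi at j. *)
Lemma say_from_know phi :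
  (forall r, runs_of E (PA A) r -> isat E (PA A) phi r 0 /\ Know E ag chi A r) ->
  realizes E' (PA announcing) (FAnd (fmap inl phi) (Say ag chi)).
Proof.
move=> know rho run_rho.
have [phi_r know_r] := know _ (proj_run announcing_proj run_rho).
split; first exact/(sat_proj announcing_proj _ _ run_rho).
apply/sat_Say => k j.
apply: iff_trans (sat_proj announcing_proj (FK (ag k) (chi k)) j run_rho) _.
apply: iff_trans (know_r k j) _.
have [ae [a [_ [announce_a next]]]] := proj2 run_rho j.
rewrite next /=; case: (announce_a (ag k)) => _ ->.
by rewrite inE eqxx bool_ofP.
Qed.
End SayFromKnow.

Section KnowFromSay.
Variables (n : nat) (Se ACTe : Type) (ACT : 'I_n -> Type) (Obs AP : Type).
Variable E : env Se ACTe ACT Obs AP.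
Hypothesis E_wf : env_wf E.
Variables (Phi : finType) (ag : Phi -> 'I_n) (chi : Phi -> form n AP).
Variable A' : forall i, automaton Obs (ACT' ACT ag i).
Hypothesis A'_wf : forall i, aut_wf (A' i).
Local Notation E' := (Eprime E ag).

Definition silent i : automaton Obs (ACT i) :=
  Aut (aut_q0 (A' i)) (aut_mu (A' i)) (fun q a => exists Psi, aut_alpha (A' i) q (a, Psi)).

Lemma silent_wf i : aut_wf (silent i).
Proof. by move=> q; have [[a Psi] alpha_a] := A'_wf q; exists a, Psi. Qed.

Lemma silent_proj i s a : @PA _ _ _ silent i s a <-> exists Psi, @PA _ _ _ A' i s (a, Psi).
Proof. by []. Qed.

(* If agent i = ag k knows chi k at (r,m) then it
   announces K_i chi k there; at any point (r',m') with the same automaton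
   state it may make the same announcement, and by Say(Phi) it then knows
   chi k at (r',m'), so chi k holds there: K_i chi k implies K_i^A chi k. *)
Lemma know_from_say phi :
  realizes E' (PA A') (FAnd (fmap inl phi) (Say ag chi)) ->
  forall r, runs_of E (PA silent) r -> isat E (PA silent) phi r 0 /\ Know E ag chi silent r.
Proof.
move=> real r run_r.
have [rho [run_rho <-]] := lift_run0 silent_proj run_r.
have Say_at rho0 : runs_of E' (PA A') rho0 -> forall k j,
    sat (runs_of E' (PA A')) (e_obs E') (e_val E') (FK (ag k) (fmap inl (chi k))) rho0 j
    <-> k \in val ((rho0 j.+1).2 (ag k)).
  by move=> run_rho0; apply/sat_Say; exact: (real rho0 run_rho0).2.
have phi_rho := (real rho run_rho).1.
split; first exact/(sat_proj silent_proj _ _ run_rho).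
move=> k m; split=> [K_r r' m' run_r' same_state|KA_r r' m' run_r' same_loc]; last first.
  by apply: KA_r => //; rewrite same_loc.
have [rho' [run_rho' proj_rho']] := lift_run0 silent_proj run_r'; subst r'.
have [ae [a [_ [A'_a next]]]] := proj2 run_rho m.
have said_k : k \in val (a (ag k)).2.
  have /(Say_at _ run_rho k m) : sat (runs_of E' (PA A')) (e_obs E') (e_val E')
                      (fmap inl (FK (ag k) (chi k))) rho m.
    exact/(sat_proj silent_proj _ _ run_rho).
  by rewrite next.
have A'_a' : @PA _ _ _ A' (ag k) (local (e_obs E') (ag k) rho' m') (a (ag k)).
  by rewrite /PA local_proj (same_state : aut_state (A' (ag k)) _ = _); exact: A'_a.
have E'_wf : env_wf E' by move=> s; exact: E_wf s.1.
have PA'_wf i s : exists a', @PA _ _ _ A' i s a' by exact: A'_wf.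
have [rho'' [run_rho'' [eq_rho'' [ae'' [a'' [a''_k next'']]]]]] :=
  deviate E'_wf PA'_wf run_rho' A'_a'.
have K_rho'' : sat (runs_of E' (PA A')) (e_obs E') (e_val E')
                   (FK (ag k) (fmap inl (chi k))) rho'' m'.
  by apply/(Say_at _ run_rho'' k m'); rewrite next'' /= a''_k.
apply/(sat_proj silent_proj _ _ run_rho'); apply: K_rho'' => //.
by apply: local_upto => j le_jm; rewrite eq_rho''.
Qed.
End KnowFromSay.

(* Proposition 4: adding announcement actions turns the requirement that
   knowledge be computed by the protocol automata, Know(Phi,A), into the
   realizability of Say(Phi); the automata are unchanged up to their action
   labels, hence finiteness is preserved in both directions. *)
Theorem proposition4 (n : nat) (Se ACTe : finType) (ACT : 'I_n -> finType) (Obs AP : Type)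
  (E : env Se ACTe (fun i => ACT i : Type) Obs AP) (HE : env_wf E)
  (phi : form n AP)
  (Phi : finType) (ag : Phi -> 'I_n) (chi : Phi -> form n AP)
  (Phi_inj : forall k k', ag k = ag k' -> chi k = chi k' -> k = k')
  (Phi_closed : forall k j psi, subform (FK j psi) (FK (ag k) (chi k)) ->
                  exists k', ag k' = j /\ chi k' = psi) :
  ((exists A : forall i, automaton Obs (ACT i),
      (forall i, aut_wf (A i)) /\
      forall r, runs_of E (PA A) r -> isat E (PA A) phi r 0 /\ Know E ag chi A r)
   <->
   (exists A' : forall i, automaton Obs (ACT' (fun i => ACT i : Type) ag i),
      (forall i, aut_wf (A' i)) /\
      realizes (Eprime E ag) (PA A') (FAnd (fmap inl phi) (Say ag chi))))
  /\
  ((exists A : forall i, automaton Obs (ACT i),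
      (forall i, aut_wf (A i) /\ aut_finite (A i)) /\
      forall r, runs_of E (PA A) r -> isat E (PA A) phi r 0 /\ Know E ag chi A r)
   <->
   (exists A' : forall i, automaton Obs (ACT' (fun i => ACT i : Type) ag i),
      (forall i, aut_wf (A' i) /\ aut_finite (A' i)) /\
      realizes (Eprime E ag) (PA A') (FAnd (fmap inl phi) (Say ag chi)))).
Proof.
split; split.
- move=> [A [A_wf know]]; exists (announcing E ag chi A).
  by split; [exact: announcing_wf | exact: say_from_know].
- move=> [A' [A'_wf real]]; exists (silent A').
  by split; [exact: silent_wf | exact: know_from_say].
- move=> [A [A_fin know]]; exists (announcing E ag chi A).
  have A_wf i := (A_fin i).1.
  split; last exact: say_from_know.
  by move=> i; split; [exact: announcing_wf | exact: (A_fin i).2].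
- move=> [A' [A'_fin real]]; exists (silent A').
  have A'_wf i := (A'_fin i).1.
  split; last exact: know_from_say.
  by move=> i; split; [exact: silent_wf | exact: (A'_fin i).2].
Qed.
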